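(* Let $F(x)=\sum_{n\ge 1} f(n)x^n$ be a formal power series with $f(1)=1$ and composita $F^{\Delta}(n,k)$, and let $A(x)=\sum_{n\ge 1}a(n)x^n$ be its reverse series, i.e. $F(A(x))=x$. Then $a(1)=1$ and for $n>1$ $$a(n)=\frac{1}{n}\sum_{k=1}^{n-1}\binom{n+k-1}{n-1}\sum_{j=1}^{k}(-1)^j\binom{k}{j}F^{\Delta}(n+j-1,j).$$
   Context: All generating functions are formal power series in $x$. For a power series $F(x)=\sum_{n\ge 1} f(n)x^n$ with zero constant term, its composita is the two-variable function $F^{\Delta}(n,k)$ ($n\ge k\ge 1$) defined by $F^{\Delta}(n,k)=\sum_{\lambda_1+\cdots+\lambda_k=n}f(\lambda_1)f(\lambda_2)\cdots f(\lambda_k)$, where the sum runs over all compositions of $n$ into exactly $k$ positive integer parts; equivalently $[F(x)]^k=\sum_{n\ge k}F^{\Delta}(n,k)x^n$. *)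

From HB Require Import structures.
From mathcomp Require Import all_boot all_order all_algebra.
Set Implicit Arguments. Unset Strict Implicit. Unset Printing Implicit Defensive.
Import Order.TTheory GRing.Theory Num.Theory.
Local Open Scope ring_scope.

(* A formal power series F(x) = sum_n f(n) x^n is represented by its
   coefficient sequence f : nat -> R.
   composita f n k = sum over compositions (l_1,...,l_k) of n into exactly k
   positive parts of f(l_1)...f(l_k).  A composition is a function
   t : 'I_k -> 'I_(n+1) with positive values summing to n. *)
Definition composita (R : pzSemiRingType) (f : nat -> R) (n k : nat) : R :=
  \sum_(t : {ffun 'I_k -> 'I_n.+1} |
          ((\sum_(i < k) (t i : nat))%N == n) && [forall i, 0 < (t i : nat)]%N)
     \prod_(i < k) f (t i).

(* [x^n] F(A(x)) for series with zero constant terms: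
   sum_{k=1}^{n} f(k) [x^n] A(x)^k = sum_{k=1}^n f(k) A^Delta(n,k). *)
Definition comp_coef (R : pzSemiRingType) (f a : nat -> R) (n : nat) : R :=
  \sum_(1 <= k < n.+1) f k * composita a n k.

(* All power series are handled through polynomial truncations: two
   polynomials are identified modulo x^N when their first N coefficients
   agree ([eqm N]).  Write the reverse series as A = x V and the series as
   F = x W, so that W(0) = f(1) = 1 and, with U = W o A, the reversion
   F(A) = x becomes U V = 1 (mod x^(N+1)).

   1. Truncated equality is a congruence for +, -, *, powers, derivative
      and composition with a series without constant term.
   2. Lagrange inversion: if U V = 1 and W^(N+1) Q = 1 (mod x^(N+1)) then
      [x^N] A' = [x^N] Q, i.e. (N+1) a(N+1) = [x^N] W^-(N+1).  The proof is
      the residue computation [x^N] U^(N+1) A' A^j = [j = N].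
   3. The negative binomial series: (1 - s)^(n+1) * sum_k C(n+k,k) s^k = 1
      (mod x^(N+1)) when s(0) = 0; take s = 1 - W.
   4. Expanding (1 - W)^k binomially and reading [x^N] W^j as the composita
      F^Delta(N+j, j) gives the formula of the theorem. *)

From HB Require Import structures.
From mathcomp Require Import all_boot all_order all_algebra.
From mathcomp Require Import zify ring.
Import Order.TTheory GRing.Theory Num.Theory.
Local Open Scope ring_scope.

Section TruncatedEquality.
Context {R : comNzRingType}.
Implicit Types p q r s t : {poly R}.

Definition eqm N p q := forall i, (i < N)%N -> p`_i = q`_i.

Lemma eqm_refl N p : eqm N p p.
Proof. by []. Qed.

Lemma eqm_sym {N p q} : eqm N p q -> eqm N q p.
Proof. by move=> h i hi; rewrite h. Qed.

Lemma eqm_trans {N p q r} : eqm N p q -> eqm N q r -> eqm N p r.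
Proof. by move=> h1 h2 i hi; rewrite h1 // h2. Qed.

Lemma eqm_le {M N p q} : (M <= N)%N -> eqm N p q -> eqm M p q.
Proof. by move=> hMN h i hi; apply: h; apply: leq_trans hMN. Qed.

Lemma eqmB {N p q p' q'} : eqm N p p' -> eqm N q q' -> eqm N (p - q) (p' - q').
Proof. by move=> h1 h2 i hi; rewrite !coefB h1 // h2. Qed.

Lemma eqmM {N p q p' q'} : eqm N p p' -> eqm N q q' -> eqm N (p * q) (p' * q').
Proof.
move=> h1 h2 i hi; rewrite !coefM; apply: eq_bigr => j _.
have hj := ltn_ord j; rewrite h1 ?h2 //; lia.
Qed.

Lemma eqmX {N p q} k : eqm N p q -> eqm N (p ^+ k) (q ^+ k).
Proof.
move=> h; elim: k => [|k IH]; first exact: eqm_refl.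
by rewrite !exprS; apply: eqmM.
Qed.

Lemma eqm_deriv {N p q} : eqm N.+1 p q -> eqm N p^`() q^`().
Proof. by move=> h i hi; rewrite !coef_deriv h. Qed.

Lemma eqm_poly_trunc {M N} (E : nat -> R) :
  (M <= N)%N -> eqm M (\poly_(i < M) E i) (\poly_(i < N) E i).
Proof. by move=> hMN i hi; rewrite !coef_poly hi (leq_trans hi hMN). Qed.

Lemma coef_expr_low t k i : t`_0 = 0 -> (i < k)%N -> (t ^+ k)`_i = 0.
Proof.
move=> t0; elim: k i => [|k IH] i //= hi.
rewrite exprS coefM big1 // => [[[|j] hj]] _ /=; first by rewrite t0 mul0r.
by rewrite IH ?mulr0 //; lia.
Qed.

Lemma eqm_mul_pow N c t : t`_0 = 0 -> eqm N (c * t ^+ N) 0.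
Proof.
move=> t0 i hi; rewrite coefM coef0 big1 // => j _.
by rewrite coef_expr_low ?mulr0 //; have := ltn_ord j; lia.
Qed.

Lemma coef_comp_low p s i : s`_0 = 0 ->
  (p \Po s)`_i = \sum_(j < i.+1) p`_j * (s ^+ j)`_i.
Proof.
move=> s0; rewrite coef_comp_poly.
rewrite (big_ord_widen (size p + i.+1) (fun j => p`_j * (s ^+ j)`_i)) ?leq_addr //.
rewrite [RHS](big_ord_widen (size p + i.+1) (fun j => p`_j * (s ^+ j)`_i)) ?leq_addl //.
rewrite big_mkcond [RHS]big_mkcond; apply: eq_bigr => j _.
case: ifP => h1; case: ifP => h2 //.
  by rewrite coef_expr_low ?mulr0 //; move/negbT: h2; rewrite -leqNgt.
by rewrite nth_default ?mul0r // leqNgt h1.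
Qed.

Lemma eqm_comp {N p q s} : s`_0 = 0 -> eqm N p q -> eqm N (p \Po s) (q \Po s).
Proof.
move=> s0 h i hi; rewrite !coef_comp_low //; apply: eq_bigr => j _.
by have hj := ltn_ord j; rewrite h //; lia.
Qed.

Lemma comp_poly_exp p q k : (p ^+ k) \Po q = (p \Po q) ^+ k.
Proof.
elim: k => [|k IH]; first by rewrite !expr0 -polyC1 comp_polyC.
by rewrite !exprS comp_polyM IH.
Qed.

Lemma poly_shiftX {n} {E : nat -> R} :
  E 0%N = 0 -> \poly_(i < n.+1) E i = 'X * \poly_(i < n) E i.+1.
Proof. by move=> E0; apply/polyP => -[|i]; rewrite coefXM !coef_poly. Qed.

End TruncatedEquality.

Section LagrangeInversion.
Context {R : numDomainType} {N : nat} {U V : {poly R}}.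
Hypothesis hUV : eqm N.+1 (U * V) 1.

(* The residue computation: [x^s] U^(s+1) (x V)' = [s = 0] for s <= N,
   i.e. the coefficient of x^-1 in A^-(s+1) A' for A = x V.  For s > 0 the
   coefficient is that of the derivative of -A^-s / s, which vanishes; the
   division by s is why the coefficients must have characteristic 0. *)
Lemma coef_residue s : (s <= N)%N -> (U ^+ s.+1 * ('X * V)^`())`_s = (s == 0%N)%:R.
Proof.
move=> hs; rewrite derivM derivX mul1r mulrDr mulrCA.
case: s hs => [|s] hs; first by rewrite coefD coefXM /= addr0 expr1 (hUV _ (ltn0Sn N)) coef1.
rewrite coefD coefXM /=.
have -> : U ^+ s.+2 * V = U ^+ s.+1 * (U * V) by rewrite exprS mulrA [U * _]mulrC.
rewrite (eqmM (eqm_refl _ (U ^+ s.+1)) hUV s.+1) ?mulr1; last by lia.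
have hUV' : eqm N (U * V^`()) (- (U^`() * V)).
  move=> i hi; have := eqm_deriv hUV i hi.
  by rewrite derivM derivC coefD coef0 coefN => /eqP; rewrite addrC addr_eq0 => /eqP.
have hV' : eqm N (U ^+ s.+2 * V^`()) (- (U^`() * U ^+ s)).
  have -> : U ^+ s.+2 * V^`() = U ^+ s.+1 * (U * V^`()) by rewrite exprS mulrA [U * _]mulrC.
  apply: (eqm_trans (eqmM (eqm_refl _ _) hUV')).
  have -> : U ^+ s.+1 * - (U^`() * V) = - (U^`() * U ^+ s) * (U * V) by rewrite exprSr; ring.
  rewrite -[X in eqm _ _ X]mulr1; exact: eqmM (eqm_refl _ _) (eqm_le _ hUV).
rewrite (hV' s) ?coefN; last by lia.
have -> : (U^`() * U ^+ s)`_s = (U ^+ s.+1)`_s.+1.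
  apply: (@mulIf _ s.+1%:R); first by rewrite pnatr_eq0.
  by rewrite !mulr_natr -coef_deriv deriv_exp coefMn.
by rewrite subrr.
Qed.

Lemma coef_lagrange_basis j :
  (U ^+ N.+1 * ('X * V)^`() * ('X * V) ^+ j)`_N = (j == N)%:R.
Proof.
set D := ('X * V)^`().
have -> : U ^+ N.+1 * D * ('X * V) ^+ j = 'X^j * (U ^+ N.+1 * V ^+ j * D).
  by rewrite exprMn; ring.
rewrite coefXnM; case: ltnP => hj; first by rewrite eq_sym ltn_eqF.
have -> : U ^+ N.+1 * V ^+ j * D = (U * V) ^+ j * (U ^+ (N - j).+1 * D).
  by rewrite -(subnK hj) -addSn exprD exprMn subnK //; ring.
rewrite (eqmM (eqmX j hUV) (eqm_refl _ _) (N - j)%N); last by lia.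
rewrite expr1n mul1r coef_residue; last by lia.
by congr (_ %:R); apply/eqP/eqP; lia.
Qed.

Lemma coef_lagrange_comp P :
  (U ^+ N.+1 * ('X * V)^`() * (P \Po ('X * V)))`_N = P`_N.
Proof.
rewrite comp_polyE mulr_sumr coef_sum.
under eq_bigr => j _ do rewrite -scalerAr coefZ coef_lagrange_basis.
case: (ltnP N (size P)) => hs.
  rewrite (bigD1 (Ordinal hs)) //= eqxx mulr1 big1 ?addr0 // => j hj.
  suff /negbTE -> : (j : nat) != N by rewrite mulr0.
  by apply: contra hj => /eqP hj; apply/eqP/val_inj.
rewrite nth_default // big1 // => j _.
suff /negbTE -> : (j : nat) != N by rewrite mulr0.
by rewrite neq_ltn (leq_trans (ltn_ord j)).
Qed.

End LagrangeInversion.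

Lemma lagrange_inversion {R : numDomainType} {N} {V W Q : {poly R}} :
  eqm N.+1 (V * (W \Po ('X * V))) 1 -> eqm N.+1 (W ^+ N.+1 * Q) 1 ->
  (('X * V)^`())`_N = Q`_N.
Proof.
set A := 'X * V; set U := W \Po A => hVU hWQ.
have A0 : A`_0 = 0 by rewrite coefXM.
have hUV : eqm N.+1 (U * V) 1 by rewrite mulrC.
have hUQ : eqm N.+1 (U ^+ N.+1 * (Q \Po A)) 1.
  by have := eqm_comp A0 hWQ; rewrite comp_polyM comp_poly_exp -polyC1 comp_polyC.
have hQA : eqm N.+1 (Q \Po A) (V ^+ N.+1).
  have hVUQ : eqm N.+1 ((U * V) ^+ N.+1 * (Q \Po A)) (V ^+ N.+1).
    have := eqmM (eqm_refl _ (V ^+ N.+1)) hUQ.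
    by rewrite mulr1 mulrA -exprMn [V * U]mulrC.
  apply: eqm_trans hVUQ; apply: eqm_sym.
  by have := eqmM (eqmX N.+1 hUV) (eqm_refl _ (Q \Po A)); rewrite expr1n mul1r.
rewrite -(coef_lagrange_comp hUV Q) -/A.
have := eqmM (eqm_refl _ (U ^+ N.+1 * A^`())) hQA => /(_ N (ltnSn N)) ->.
have := eqmM (eqmX N.+1 hUV) (eqm_refl _ A^`()) => /(_ N (ltnSn N)).
by rewrite expr1n mul1r => <-; rewrite exprMn mulrAC.
Qed.

(* Multiplication by 1 - x takes first differences of the coefficients. *)
Lemma mul_one_sub_telescope {R : comNzRingType} (x : R) (d e : nat -> R) N :
  d 0%N = e 0%N -> (forall k, d k.+1 - d k = e k.+1) ->
  (1 - x) * \sum_(k < N.+1) d k * x ^+ k =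
  \sum_(k < N.+1) e k * x ^+ k - d N * x ^+ N.+1.
Proof.
move=> h0 hS; elim: N => [|N IH]; first by rewrite !big_ord1 -h0; ring.
rewrite big_ord_recr /= mulrDr IH [in RHS]big_ord_recr /= -hS [x ^+ N.+2]exprS; ring.
Qed.

Section NegativeBinomial.
Context {R : comNzRingType}.

(* Truncation of (1 - s)^-(n+1) = sum_k C(n+k, k) s^k. *)
Definition negbin_trunc (s : {poly R}) n N :=
  \sum_(k < N.+1) 'C(n + k, k)%:R * s ^+ k.

(* By induction on n, multiplying by 1 - s each time and telescoping with
   Pascal's rule; the truncation error is a multiple of s^(N+1). *)
Lemma negbin_truncP (s : {poly R}) n N : s`_0 = 0 ->
  eqm N.+1 ((1 - s) ^+ n.+1 * negbin_trunc s n N) 1.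
Proof.
move=> s0; have drop_tail c (p : {poly R}) : eqm N.+1 (p - c * s ^+ N.+1) p.
  by rewrite -[X in eqm _ _ X]subr0; exact: eqmB (eqm_refl _ _) (eqm_mul_pow _ _ _ s0).
elim: n => [|n IH].
  rewrite expr1 /negbin_trunc.
  rewrite (mul_one_sub_telescope s (fun k => 'C(0 + k, k)%:R) (fun k => (k == 0%N)%:R)).
  - apply: eqm_trans (drop_tail _ _) _.
    by rewrite big_ord_recl big1 ?addr0 ?mul1r // => i _; rewrite mul0r.
  - by rewrite bin0.
  - by move=> k; rewrite !add0n !binn subrr.
rewrite exprSr -mulrA /negbin_trunc.
rewrite (mul_one_sub_telescope s (fun k => 'C(n.+1 + k, k)%:R) (fun k => 'C(n + k, k)%:R)).
- exact: eqm_trans (eqmM (eqm_refl _ _) (drop_tail _ _)) IH.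
- by rewrite !addn0 !bin0.
- by move=> k; rewrite addSn binS natrD addSnnS addrK.
Qed.

Lemma coef_one_sub_expr (p : {poly R}) k i :
  ((1 - p) ^+ k)`_i = \sum_(j < k.+1) (-1) ^+ j * 'C(k, j)%:R * (p ^+ j)`_i.
Proof.
rewrite addrC exprD1n coef_sum; apply: eq_bigr => j _.
by rewrite coefMn -scaleN1r exprZn coefZ mulr_natr mulrnAl.
Qed.

Lemma coef_negbin_trunc_one_sub (p : {poly R}) n N i :
  (negbin_trunc (1 - p) n N)`_i =
  \sum_(0 <= k < N.+1) 'C(n + k, k)%:R *
    \sum_(0 <= j < k.+1) (-1) ^+ j * 'C(k, j)%:R * (p ^+ j)`_i.
Proof.
rewrite coef_sum big_mkord; apply: eq_bigr => k _.
by rewrite mulr_natl coefMn coef_one_sub_expr big_mkord mulr_natl.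
Qed.

End NegativeBinomial.

Section Composita.
Context {R : comNzRingType}.

Lemma composita_coef (g : nat -> R) m k : g 0%N = 0 ->
  composita g m k = ((\poly_(i < m.+1) g i) ^+ k)`_m.
Proof.
move=> g0.
have -> : (\poly_(i < m.+1) g i) ^+ k = \prod_(i < k) \sum_(j < m.+1) g j *: 'X^j.
  by rewrite prodr_const card_ord poly_def.
rewrite bigA_distr_bigA /=.
under eq_bigr => t _ do rewrite scaler_prod prodrXr.
rewrite coef_sumMXn /composita big_mkcond [RHS]big_mkcond /=.
apply: eq_bigr => t _; rewrite eq_sym; case: eqP => //= _.
case: (boolP [forall i, 0 < (t i : nat)]%N) => // /forallPn [i hi].
rewrite (bigD1 i) //=; move: hi; rewrite lt0n negbK => /eqP ->.
by rewrite g0 mul0r.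
Qed.

(* With F = x W, [x^N] W^j = [x^(N+j)] F^j = F^Delta(N+j, j). *)
Lemma coef_shifted_pow (g : nat -> R) N j : g 0%N = 0 ->
  ((\poly_(i < N.+1) g i.+1) ^+ j)`_N = composita g (N + j) j.
Proof.
move=> g0; case: j => [|j]; first by rewrite composita_coef // !expr0 addn0.
rewrite composita_coef // (poly_shiftX g0) exprMn coefXnM ltnNge leq_addl /= addnK.
by apply: (eqmX _ (eqm_poly_trunc _ _) N (ltnSn N)); rewrite addnS ltnS leq_addr.
Qed.

Lemma reversion_eqm (f a : nat -> R) N : a 0%N = 0 ->
  (forall n, (1 <= n)%N -> comp_coef f a n = (n == 1%N)%:R) ->
  let V := \poly_(i < N.+1) a i.+1 in let W := \poly_(i < N.+1) f i.+1 in
  eqm N.+1 (V * (W \Po ('X * V))) 1.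
Proof.
move=> a0 hrev V W i hi.
have A0 : ('X * V)`_0 = 0 by rewrite coefXM.
have -> : (V * (W \Po ('X * V)))`_i = (('X * W) \Po ('X * V))`_i.+1.
  by rewrite comp_polyM comp_polyX -mulrA coefXM.
rewrite coef_comp_low // big_ord_recl coefXM mul0r add0r coef1 -(hrev i.+1) //.
rewrite /comp_coef big_add1 /= big_mkord; apply: eq_bigr => k _.
rewrite coefXM coef_poly (leq_trans (ltn_ord k)) //= composita_coef //.
rewrite (eqmX k.+1 (eqm_poly_trunc a (_ : i.+2 <= N.+2)%N) i.+1 (ltnSn i.+1)) //.
by rewrite -(poly_shiftX a0).
Qed.

End Composita.

Lemma sum_from1 {R : nmodType} (F : nat -> R) n :
  F 0%N = 0 -> \sum_(0 <= i < n) F i = \sum_(1 <= i < n) F i.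
Proof.
by move=> F0; case: n => [|n]; [rewrite !big_geq | rewrite big_ltn // F0 add0r].
Qed.

Theorem corollary4 (R : numFieldType) (f a : nat -> R)
  (hf0 : f 0%N = 0) (hf1 : f 1%N = 1)
  (ha0 : a 0%N = 0)
  (hrev : forall n : nat, (1 <= n)%N -> comp_coef f a n = (n == 1%N)%:R) :
  a 1%N = 1 /\
  forall n : nat, (1 < n)%N ->
    a n = n%:R^-1 *
      \sum_(1 <= k < n) 'C(n + k - 1, n - 1)%:R *
        \sum_(1 <= j < k.+1) (-1) ^+ j * 'C(k, j)%:R * composita f (n + j - 1) j.
Proof.
split.
  have := hrev 1%N isT; rewrite /comp_coef big_nat1 hf1 mul1r composita_coef //.
  by rewrite expr1 coef_poly.
case=> [|N] // hN; set W := \poly_(i < N.+1) f i.+1.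
(* Q := sum_k C(N+k, k) (1 - W)^k inverts W^(N+1) modulo x^(N+1). *)
have W0 : (1 - W)`_0 = 0 by rewrite coefB coef1 coef_poly hf1 subrr.
have hQ := negbin_truncP _ N N W0; rewrite opprB addrC subrK in hQ.
have := lagrange_inversion (reversion_eqm f a N ha0 hrev) hQ.
rewrite coef_deriv coefXM /= coef_poly ltnSn coef_negbin_trunc_one_sub => hL.
rewrite -[a _](mulKf (_ : N.+1%:R != 0)) ?pnatr_eq0 // mulr_natl hL; congr (_ * _).
(* Reindex: the terms with k = 0 or j = 0 vanish since [x^N] W^0 = 0. *)
have W0N : (W ^+ 0)`_N = 0 by rewrite expr0 coef1 eqn0Ngt -ltnS hN.
rewrite sum_from1; last by rewrite big_nat1 W0N !mulr0.
apply: eq_big_nat => k _; rewrite sum_from1 ?W0N ?mulr0 //.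
have -> : (N.+1 + k - 1 = N + k)%N by lia.
rewrite subn1 /= -bin_sub ?leq_addl // addnK; congr (_ * _).
apply: eq_big_nat => j _; rewrite coef_shifted_pow //.
by have -> : (N.+1 + j - 1 = N + j)%N by lia.
Qed.
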